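(* If $\mathcal C_1$ and $\mathcal C_2$ are Baker classes, then $\mathcal C_1\oplus\mathcal C_2$ is a Baker class.
   Context: A layering of a graph $G$ is a function $\lambda:V(G)\to\mathbb{Z}$ with $|\lambda(u)-\lambda(v)|\le1$ for every edge $uv$. An ordered graph is a finite graph with a linear ordering of its vertices; subgraphs inherit the restricted ordering. For an infinite sequence $\mathbf r=r_1,r_2,\dots$ of positive integers and an integer $s\ge0$, let $\mathrm{tail}_s(\mathbf r)=r_{s+1},r_{s+2},\dots$, $\mathrm{tail}(\mathbf r)=\mathrm{tail}_1(\mathbf r)$ and $\mathrm{head}(\mathbf r)=r_1$. The Baker game between Destroyer and Preserver has states $(G,\mathbf r)$ with $G$ an ordered graph and $\mathbf r$ an infinite sequence of positive integers. If $V(G)=\emptyset$ the game stops. Otherwise, in one round Destroyer chooses either Delete (the smallest vertex $v$ of $G$ is removed and the game proceeds to $(G-v,\mathrm{tail}(\mathbf r))$) or Restrict (Destroyer chooses a layering $\lambda$ of $G$, Preserver chooses an interval $I$ of at most $\mathrm{head}(\mathbf r)$ consecutive integers, and the game proceeds to $(G[\lambda^{-1}(I)],\mathrm{tail}(\mathbf r))$). Destroyer wins on $(G,\mathbf r)$ in $t$ rounds if he has a strategy such that, regardless of Preserver's choices, the game stops after at most $t$ rounds. A class $\mathcal C$ of ordered graphs is a Baker class if for every infinite sequence $\mathbf r$ of positive integers there is an integer $t$ such that for every $G\in\mathcal C$, Destroyer wins the Baker game on $(G,\mathbf r)$ in $t$ rounds. For classes $\mathcal C_1,\mathcal C_2$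 of ordered graphs, $\mathcal C_1\oplus\mathcal C_2$ is the class of ordered graphs $G$ for which there exists a set $B\subseteq V(G)$ (a base) such that $G[B]\in\mathcal C_1$ and, for each component $C$ of $G-B$: $G[C]\in\mathcal C_2$, the set $K_C$ of vertices of $B$ having a neighbor in $C$ induces a clique, and every vertex of $K_C$ is smaller than every vertex of $C$. *)

From HB Require Import structures.
From mathcomp Require Import all_boot all_order all_algebra.
From Stdlib Require Import ClassicalDescription.
Set Implicit Arguments. Unset Strict Implicit. Unset Printing Implicit Defensive.
Import Order.TTheory GRing.Theory Num.Theory.

(* An ordered graph: a finite vertex set of natural-number labels (given by a
   sequence; only membership matters), ordered by the usual order on nat, and
   an adjacency relation.  Edges are symmetrised and loops are ignored, so an
   ordered graph is a finite simple graph with a linear order on its vertices. *)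
Record ograph := OGraph { verts : seq nat; adj : nat -> nat -> bool }.

Definition edge (G : ograph) (u v : nat) : bool :=
  [&& u \in verts G, v \in verts G, u != v & adj G u v || adj G v u].

Definition induced (G : ograph) (P : pred nat) : ograph :=
  OGraph [seq x <- verts G | P x] (adj G).

Definition layering (G : ograph) (lam : nat -> int) : Prop :=
  forall u v, edge G u v -> (`|lam u - lam v| <= 1)%R.

Definition tailseq (r : nat -> nat) : nat -> nat := fun i => r i.+1.
Definition headseq (r : nat -> nat) : nat := r 0.

(* Destroyer wins the Baker game on (G, r) in at most t rounds. *)
Fixpoint destroyer_wins (t : nat) (G : ograph) (r : nat -> nat) : Prop :=
  match t with
  | 0 => verts G = [::]
  | t'.+1 =>
      verts G = [::]
      \/
         (exists v, v \in verts G /\ (forall u, u \in verts G -> v <= u) /\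
            destroyer_wins t' (induced G (fun x => x != v)) (tailseq r))
      \/ (* Restrict: Destroyer picks a layering, Preserver any interval
            {a, a+1, ..., a+k-1} with k <= head r *)
         (exists lam : nat -> int, layering G lam /\
            forall (a : int) (k : nat), k <= headseq r ->
              destroyer_wins t'
                (induced G (fun x => (a <= lam x)%R && (lam x < a + k%:Z)%R))
                (tailseq r))
  end.

Definition ograph_class := ograph -> Prop.

Definition baker_class (C : ograph_class) : Prop :=
  forall r : nat -> nat, (forall i, 0 < r i) ->
    exists t : nat, forall G, C G -> destroyer_wins t G r.

Definition connected_in (H : ograph) (x y : nat) : Prop :=
  exists p : seq nat, path (edge H) x p /\ last x p = y.

Definition connectedb (H : ograph) (x : nat) : pred nat :=
  fun y => if excluded_middle_informative (connected_in H x y) then true else false.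

Definition oplus (C1 C2 : ograph_class) : ograph_class := fun G =>
  exists B : pred nat,
    C1 (induced G B) /\
    let H := induced G (predC B) in
    forall x, x \in verts H ->
      let C := connectedb H x in
      let K := fun b => [/\ b \in verts G, B b & exists2 c, C c & edge G b c] in
      [/\ C2 (induced G C),
          (forall b1 b2, K b1 -> K b2 -> b1 != b2 -> edge G b1 b2) &
          (forall b c, K b -> c \in verts H -> C c -> b < c)].

From HB Require Import structures.
From mathcomp Require Import all_boot all_order all_algebra zify.
From Stdlib Require Import ClassicalDescription FunctionalExtensionality.
Set Implicit Arguments. Unset Strict Implicit. Unset Printing Implicit Defensive.
Import Order.TTheory GRing.Theory Num.Theory.

(* Let G have base B with G[B] in C1, and let every component C of G - B lie
   in C2 with attachment set K_C a clique of vertices below C.  Destroyer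
   plays the strategy for G[B] on the odd rounds and alternates it with
   "separating" restrictions on the even rounds.  A separating layering puts
   B, and every component attached to a surviving base vertex, on layer 0,
   and the i-th free component on layer r0 * i; a window of width <= r0
   therefore meets at most one free component, whose own C2-strategy then
   wins, or else every surviving vertex outside B is anchored to a surviving
   base vertex.  On anchored sets a move of the G[B]-strategy lifts: Delete
   stays legal since K_C lies below C, and a layering of the base extends to
   the whole set by copying the layer of an anchor, because K_C is a clique. *)

Lemma mem_induced G P x : (x \in verts (induced G P)) = P x && (x \in verts G).
Proof. by rewrite mem_filter. Qed.

Lemma edge_induced G P u v : edge (induced G P) u v = [&& P u, P v & edge G u v].
Proof. by rewrite /edge !mem_induced /=; case: (P u); case: (P v); rewrite /= ?andbF. Qed.

Lemma edge_sym G u v : edge G u v = edge G v u.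
Proof. by rewrite /edge; case: (u \in _); case: (v \in _); rewrite //= eq_sym orbC. Qed.

Lemma edge_verts G u v : edge G u v -> u \in verts G /\ v \in verts G.
Proof. by case/and4P. Qed.

Lemma induced_induced G P Q : induced (induced G P) Q = induced G (fun x => P x && Q x).
Proof.
by rewrite /induced /= -filter_predI; congr OGraph; apply: eq_filter => x /=; rewrite andbC.
Qed.

(* G' is a subgraph of G sharing its adjacency relation; every graph of the
   game is of this kind with respect to the starting graph. *)
Definition subgraph (G' G : ograph) : Prop :=
  adj G' = adj G /\ {subset verts G' <= verts G}.

Lemma subgraph_induced G (P Q : pred nat) :
  {in verts G, forall x, P x -> Q x} -> subgraph (induced G P) (induced G Q).
Proof.
move=> PQ; split=> // x; rewrite !mem_induced => /andP [Px Gx].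
by rewrite Gx (PQ x Gx Px).
Qed.

Lemma subgraph_restrict G' G P : subgraph G' G -> subgraph (induced G' P) (induced G P).
Proof.
case=> Eadj sub; split; first exact: Eadj.
by move=> x; rewrite !mem_induced => /andP [-> /sub].
Qed.

Lemma edge_subgraph G' G u v : subgraph G' G -> edge G' u v -> edge G u v.
Proof.
case=> Eadj sub /and4P [Gu Gv uv Euv].
by apply/and4P; split; rewrite ?sub // -Eadj.
Qed.

Lemma subgraph_nil G' G : subgraph G' G -> verts G = [::] -> verts G' = [::].
Proof. by case=> _ sub E; case: (verts G') sub => // x s /(_ x (mem_head x s)); rewrite E. Qed.

Lemma wins_empty t G r : verts G = [::] -> destroyer_wins t G r.
Proof. by case: t => [|t] //= ->; left. Qed.

Lemma wins_mono t t' G G' r r' :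
  destroyer_wins t G r -> t <= t' -> subgraph G' G -> (forall i, r' i <= r i) ->
  destroyer_wins t' G' r'.
Proof.
elim: t t' G G' r r' => [|t IH] t' G G' r r' /=.
  by move=> G0 _ sub _; apply: wins_empty; apply: subgraph_nil sub G0.
case: t' => [|t'] //= W; rewrite ltnS => tt' sub rr'.
have tail_rr' : forall i, tailseq r' i <= tailseq r i by move=> i; apply: rr'.
case: W => [G0 | [[v [Gv [vmin W]]] | [lam [Hlam W]]]].
- by left; apply: subgraph_nil sub G0.
- case G'v: (v \in verts G').
  + right; left; exists v; split=> //; split; first by move=> u /(proj2 sub); apply: vmin.
    exact: IH W tt' (subgraph_restrict _ sub) tail_rr'.
  + (* v is already gone: Destroyer wastes the round on a constant layering *)
    right; right; exists (fun _ => 0%R); split; first by move=> u w _; rewrite subrr normr0.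
    move=> a k _; apply: IH W tt' _ tail_rr'; split=> [|x]; first exact: (proj1 sub).
    rewrite !mem_induced => /andP [_ G'x]; rewrite (proj2 sub _ G'x) andbT.
    by apply: contraTneq G'x => ->; rewrite G'v.
- right; right; exists lam; split; first by move=> u w /(edge_subgraph sub); apply: Hlam.
  move=> a k k_le; have W' := W a k (leq_trans k_le (rr' 0)).
  exact: IH W' tt' (subgraph_restrict _ sub) tail_rr'.
Qed.

Lemma wins_sub t G G' r : destroyer_wins t G r -> subgraph G' G -> destroyer_wins t G' r.
Proof. by move=> W sub; apply: wins_mono W (leqnn t) sub (fun i => leqnn _). Qed.

Definition classicb (P : Prop) : bool :=
  if excluded_middle_informative P then true else false.

Lemma classicbP P : reflect P (classicb P).
Proof. by rewrite /classicb; case: excluded_middle_informative => h; constructor. Qed.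

Lemma connectedbP H x y : reflect (connected_in H x y) (connectedb H x y).
Proof. exact: classicbP. Qed.

Lemma connected_sym H x y : connected_in H x y -> connected_in H y x.
Proof.
case=> p [Hp <-]; exists (rev (belast x p)); split.
  by rewrite rev_path; apply: sub_path Hp => u v /=; rewrite edge_sym.
by case: p {Hp} => [|z p] //=; rewrite rev_cons last_rcons.
Qed.

Lemma connected_trans H x y z :
  connected_in H x y -> connected_in H y z -> connected_in H x z.
Proof.
case=> p [Hp Ep] [q [Hq Eq]]; exists (p ++ q).
by rewrite cat_path last_cat Hp Ep.
Qed.

Lemma connectedb_refl H x : connectedb H x x.
Proof. by apply/connectedbP; exists [::]. Qed.

Lemma connectedb_class H x y : connectedb H x y -> connectedb H x = connectedb H y.
Proof.
move/connectedbP=> xy; apply: functional_extensionality => z.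
apply/connectedbP/connectedbP => Hz; last exact: connected_trans xy Hz.
exact: connected_trans (connected_sym xy) Hz.
Qed.

Definition window (a : int) (k : nat) (z : int) : bool := (a <= z)%R && (z < a + k%:Z)%R.

Lemma window_multiples (a : int) (k r0 m n : nat) : k <= r0 ->
  window a k (Posz (r0 * m)) -> window a k (Posz (r0 * n)) -> m = n.
Proof.
move=> k_le /andP [am ma] /andP [an na].
case: (ltngtP m n) => // lt_mn; exfalso.
- have : r0 * m + r0 <= r0 * n by rewrite addnC -mulnS leq_mul2l lt_mn orbT.
  lia.
- have : r0 * n + r0 <= r0 * m by rewrite addnC -mulnS leq_mul2l lt_mn orbT.
  lia.
Qed.

(* r is dominated by R on all tails reached during the first m rounds. *)
Definition dominated (R r : nat -> nat) (m : nat) : Prop :=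
  forall n i, n <= m -> r (n + i) <= R i.

Lemma dominated_tail R r m : dominated R r m.+1 -> dominated R (tailseq r) m.
Proof. by move=> dom n i le_nm; apply: (dom n.+1). Qed.

Section Decomposition.

(* A graph G with base B, satisfying the conditions of C1 (+) C2 except the
   one on G[B], and with every component of G - B won in t2 rounds against R. *)
Variables (G : ograph) (B : pred nat) (t2 : nat) (R : nat -> nat).

Definition GminusB := induced G (predC B).

Definition comp (x : nat) : pred nat := connectedb GminusB x.

(* b belongs to the set K_C of the component C of x. *)
Definition border (x b : nat) : Prop :=
  [/\ b \in verts G, B b & exists2 c, comp x c & edge G b c].

Hypothesis comp_wins :
  forall x, x \in verts GminusB -> destroyer_wins t2 (induced G (comp x)) R.
Hypothesis border_clique : forall x, x \in verts GminusB ->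
  forall b1 b2, border x b1 -> border x b2 -> b1 != b2 -> edge G b1 b2.
Hypothesis border_below : forall x, x \in verts GminusB ->
  forall b c, border x b -> c \in verts GminusB -> comp x c -> b < c.

Lemma mem_GminusB v : v \in verts G -> ~~ B v -> v \in verts GminusB.
Proof. by move=> Gv Bv; rewrite mem_induced /= Bv. Qed.

Lemma comp_refl x : comp x x.
Proof. exact: connectedb_refl. Qed.

Lemma comp_class x y : comp x y -> comp x = comp y.
Proof. exact: connectedb_class. Qed.

Lemma comp_edge u v : u \in verts G -> v \in verts G -> ~~ B u -> ~~ B v ->
  edge G u v -> comp u = comp v.
Proof.
move=> Gu Gv Bu Bv Euv; apply: comp_class; apply/connectedbP; exists [:: v].
by rewrite /= andbT edge_induced /= Bu Bv Euv.
Qed.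

(* The position of the first vertex of the component of v: it identifies the
   component. *)
Definition comp_index (v : nat) : nat := find (comp v) (verts G).

Lemma comp_index_eq c y : y \in verts G -> comp_index y = comp_index c -> comp c y.
Proof.
move=> Gy E.
have has_y : has (comp y) (verts G) by apply/hasP; exists y => //; exact: comp_refl.
have has_c : has (comp c) (verts G) by rewrite has_find -/(comp_index c) -E -has_find.
have := nth_find 0 has_y; rewrite -/(comp_index y) E => /comp_class Ey.
by rewrite (comp_class (nth_find 0 has_c)) -Ey comp_refl.
Qed.

Definition attach (Y : pred nat) (v b : nat) : Prop := Y b /\ border v b.

Definition attached (Y : pred nat) (v : nat) : bool := classicb (exists b, attach Y v b).

Lemma attached_edge (X : pred nat) u v :
  u \in verts G -> X u -> B u -> edge G u v -> attached X v.
Proof.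
move=> Gu Xu Bu Euv; apply/classicbP; exists u; split=> //.
by split=> //; exists v => //; exact: comp_refl.
Qed.

Definition anchored (Y : pred nat) : Prop :=
  forall y, y \in verts G -> Y y -> ~~ B y -> exists b, attach Y y b.

(* A canonical choice of bordering base vertex, depending only on the component. *)
Definition anchor (Y : pred nat) (v : nat) : nat :=
  nth 0 [seq b <- verts G | classicb (attach Y v b)] 0.

Lemma anchorP (Y : pred nat) v b : attach Y v b -> attach Y v (anchor Y v).
Proof.
move=> Yvb; have [Gb _ _] := Yvb.2.
have : anchor Y v \in [seq b <- verts G | classicb (attach Y v b)].
  by apply: mem_nth; rewrite size_filter_gt0; apply/hasP; exists b => //; apply/classicbP.
by rewrite mem_filter => /andP [/classicbP].
Qed.

Definition sep_level (X : pred nat) (v : nat) : nat :=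
  if B v || attached X v then 0 else (comp_index v).+1.

Definition sep_layering (r0 : nat) (X : pred nat) (v : nat) : int :=
  Posz (r0 * sep_level X v).

Lemma sep_level_edge (X : pred nat) u v : u \in verts G -> v \in verts G -> X u -> X v ->
  edge G u v -> sep_level X u = sep_level X v.
Proof.
move=> Gu Gv Xu Xv Euv; rewrite /sep_level.
case Bu: (B u); case Bv: (B v) => //=.
- by rewrite (attached_edge Gu Xu Bu Euv).
- by rewrite edge_sym in Euv; rewrite (attached_edge Gv Xv Bv Euv).
- by rewrite /attached /attach /border /comp_index (comp_edge Gu Gv (negbT Bu) (negbT Bv) Euv).
Qed.

Lemma sep_layering_layering r0 (X : pred nat) : layering (induced G X) (sep_layering r0 X).
Proof.
move=> u v; rewrite edge_induced => /and3P [Xu Xv Euv]; have [Gu Gv] := edge_verts Euv.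
by rewrite /sep_layering (sep_level_edge Gu Gv Xu Xv Euv) subrr normr0.
Qed.

Lemma window_free_comp r0 (X : pred nat) a k c y : k <= r0 -> y \in verts G ->
  ~~ (B c || attached X c) -> window a k (sep_layering r0 X c) ->
  window a k (sep_layering r0 X y) -> comp c y.
Proof.
move=> k_le Gy free_c Wc Wy; have := window_multiples k_le Wc Wy.
rewrite {1}/sep_level (negbTE free_c) /sep_level; case: ifP => // _ [E].
exact: comp_index_eq Gy (esym E).
Qed.

Definition ext_layering (Y : pred nat) (lam : nat -> int) (v : nat) : int :=
  if B v then lam v else lam (anchor Y v).

Definition base_part (Y : pred nat) : ograph := induced G (fun v => Y v && B v).

(* An edge from a base vertex u to v reaches within distance 1 of the anchor
   of v, since both border the component of v and K_C is a clique. *)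
Lemma anchor_close (Y : pred nat) lam u v : anchored Y -> layering (base_part Y) lam ->
  u \in verts G -> v \in verts G -> Y u -> Y v -> B u -> ~~ B v -> edge G u v ->
  (`|lam u - lam (anchor Y v)| <= 1)%R.
Proof.
move=> HY Hlam Gu Gv Yu Yv Bu Bv Euv.
have [b Yvb] := HY v Gv Yv Bv.
have [Ya bord_a] := anchorP Yvb; have [Ga Ba _] := bord_a.
have [<- | ne] := eqVneq u (anchor Y v); first by rewrite subrr normr0.
apply: Hlam; rewrite edge_induced Yu Bu Ya Ba /=.
apply: (border_clique (mem_GminusB Gv Bv)) bord_a ne.
by split=> //; exists v => //; exact: comp_refl.
Qed.

Lemma ext_layering_layering (Y : pred nat) lam : anchored Y -> layering (base_part Y) lam ->
  layering (induced G Y) (ext_layering Y lam).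
Proof.
move=> HY Hlam u v; rewrite edge_induced => /and3P [Yu Yv Euv].
have [Gu Gv] := edge_verts Euv; rewrite /ext_layering.
case Bu: (B u); case Bv: (B v).
- by apply: Hlam; rewrite edge_induced Yu Bu Yv Bv.
- exact: anchor_close HY Hlam Gu Gv Yu Yv Bu (negbT Bv) Euv.
- rewrite distrC; rewrite edge_sym in Euv.
  exact: anchor_close HY Hlam Gv Gu Yv Yu Bv (negbT Bu) Euv.
- have Ec := comp_edge Gu Gv (negbT Bu) (negbT Bv) Euv.
  by rewrite /anchor /attach /border Ec subrr normr0.
Qed.

Lemma anchored_empty (Y : pred nat) : anchored Y -> verts (base_part Y) = [::] ->
  verts (induced G Y) = [::].
Proof.
move=> HY E; case Ey: (verts (induced G Y)) => [|y s] //; exfalso.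
have /andP [Yy Gy] : Y y && (y \in verts G) by rewrite -mem_induced Ey mem_head.
have [By | By] := boolP (B y).
  by have := mem_induced G (fun v => Y v && B v) y; rewrite E Yy By Gy.
have [b [Yb [Gb Bb _]]] := HY y Gy Yy By.
by have := mem_induced G (fun v => Y v && B v) b; rewrite E Yb Bb Gb.
Qed.

(* The smallest base vertex of an anchored set is its smallest vertex, since
   K_C lies below C. *)
Lemma base_min_min (Y : pred nat) b : anchored Y ->
  (forall u, u \in verts (base_part Y) -> b <= u) ->
  forall u, u \in verts (induced G Y) -> b <= u.
Proof.
move=> HY bmin u; rewrite mem_induced => /andP [Yu Gu].
have [Bu | Bu] := boolP (B u); first by apply: bmin; rewrite mem_induced Yu Bu.
have [b' [Yb' bord]] := HY u Gu Yu Bu; have [Gb' Bb' _] := bord.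
have Gu' := mem_GminusB Gu Bu.
have lt_b'u : b' < u by apply: (border_below Gu') bord Gu' (comp_refl u).
have : b <= b' by apply: bmin; rewrite mem_induced Yb' Bb'.
by move=> le_bb'; exact: ltnW (leq_ltn_trans le_bb' lt_b'u).
Qed.

(* The two alternating claims: starting from any X, one separating round
   leads to the anchored case; in the anchored case one simulated round of the
   base strategy leads back to the general case. *)
Definition sep_claim (t : nat) : Prop := forall (X : pred nat) r,
  dominated R r t.*2.+1 -> destroyer_wins t (base_part X) (fun i => r i.*2.+1) ->
  destroyer_wins (t.*2.+1 + t2) (induced G X) r.

Definition anchored_claim (t : nat) : Prop := forall (Y : pred nat) r,
  dominated R r t.*2 -> anchored Y -> destroyer_wins t (base_part Y) (fun i => r i.*2) ->
  destroyer_wins (t.*2 + t2) (induced G Y) r.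

(* Separating round: a window either lies in one free component, won by its
   C2-strategy, or leaves an anchored set with the same base part. *)
Lemma sep_claim_of_anchored t : anchored_claim t -> sep_claim t.
Proof.
move=> Hanc X r dom W; rewrite addSn /=; right; right.
exists (sep_layering (r 0) X); split; first exact: sep_layering_layering.
move=> a k k_le; rewrite induced_induced.
have [[c [Gc Xc Wc free_c]] | no_free] := excluded_middle_informative (exists c,
  [/\ c \in verts G, X c, window a k (sep_layering (r 0) X c) & ~~ (B c || attached X c)]).
- have Gc' : c \in verts GminusB by apply: mem_GminusB Gc _; case/norP: free_c.
  apply: wins_mono (comp_wins Gc') (leq_addl _ _) _ (fun i => dom 1 i isT).
  apply: subgraph_induced => y Gy /andP [_ Wy].
  exact: window_free_comp k_le Gy free_c Wc Wy.
- apply: Hanc (dominated_tail dom) _ _.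
  + move=> y Gy /andP [Xy Wy] By.
    have Ay : attached X y by apply/negPn/negP => nA; apply: no_free; exists y; rewrite negb_or By.
    have [b [Xb bord]] := classicbP _ Ay; have [Gb Bb _] := bord.
    exists b; split=> //; rewrite Xb /=.
    by rewrite /sep_layering /sep_level Bb Ay orbT in Wy *.
  + apply: wins_sub W _; rewrite /base_part; apply: subgraph_induced => x _.
    by case/andP=> /andP [-> _] ->.
Qed.

(* Simulated round: with no rounds left the base is empty, hence so is Y;
   otherwise a Delete or Restrict on the base lifts to the anchored set. *)
Lemma anchored_claim0 : anchored_claim 0.
Proof. by move=> Y r _ HY W; apply: wins_empty; apply: anchored_empty. Qed.

Lemma anchored_claimS t : sep_claim t -> anchored_claim t.+1.
Proof.
move=> Hsep Y r dom HY W; rewrite doubleS in dom *; rewrite addSn.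
case: W => [W0 | [[b [Yb [bmin W]]] | [lam [Hlam W]]]].
- by left; apply: anchored_empty.
- right; left; exists b; split.
    by move: Yb; rewrite !mem_induced => /andP [/andP [-> _] ->].
  split; first exact: base_min_min HY bmin.
  rewrite induced_induced; apply: Hsep (dominated_tail dom) _.
  apply: wins_sub W _; rewrite /base_part induced_induced; apply: subgraph_induced => x _.
  by case/andP=> /andP [-> ->] ->.
- right; right; exists (ext_layering Y lam); split; first exact: ext_layering_layering.
  move=> a k k_le; rewrite induced_induced; apply: Hsep (dominated_tail dom) _.
  apply: wins_sub (W a k k_le) _; rewrite /base_part induced_induced.
  apply: subgraph_induced => x _ /andP [/andP [Yx Wx] Bx].
  by rewrite /ext_layering Bx in Wx; rewrite Yx Bx Wx.
Qed.

Lemma sep_claim_all t : sep_claim t.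
Proof.
elim: t => [|t IH]; apply: sep_claim_of_anchored; first exact: anchored_claim0.
exact: anchored_claimS.
Qed.

Lemma wins_decomposition t r : dominated R r t.*2.+1 ->
  destroyer_wins t (induced G B) (fun i => r i.*2.+1) ->
  destroyer_wins (t.*2.+1 + t2) G r.
Proof.
move=> dom W; have base_W : destroyer_wins t (base_part predT) (fun i => r i.*2.+1).
  by apply: wins_sub W _; apply: subgraph_induced => x _ /andP [].
apply: wins_sub (@sep_claim_all t predT r dom base_W) _.
by split=> // x Gx; rewrite mem_induced Gx.
Qed.

End Decomposition.

Theorem mainTheorem6 (C1 C2 : ograph_class) :
  baker_class C1 -> baker_class C2 -> baker_class (oplus C1 C2).
Proof.
move=> HC1 HC2 r r_pos.
have [t1 Ht1] := HC1 (fun i => r i.*2.+1) (fun i => r_pos _).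
(* R bounds every tail of r met during the 2 t1 + 1 rounds spent on the base *)
pose R i := \max_(n < t1.*2.+2) r (n + i).
have dom : dominated R r t1.*2.+1.
  move=> n i le_n; have lt_n : n < t1.*2.+2 by [].
  exact: (@leq_bigmax _ (fun m : 'I_t1.*2.+2 => r (m + i)) (Ordinal lt_n)).
have [t2 Ht2] := HC2 R (fun i => leq_trans (r_pos i) (dom 0 i isT)).
exists (t1.*2.+1 + t2) => G [B [GB_C1 Hcomp]].
apply: (wins_decomposition (B := B)) dom (Ht1 _ GB_C1).
- by move=> x /Hcomp [/Ht2].
- by move=> x /Hcomp [].
- by move=> x /Hcomp [].
Qed.
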